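(* Let $G$ be a connected simple graph on $n\geq 3$ vertices. Then $\operatorname{reg}(G)<\frac{n}{2}$.
   Context: For a simple graph $G$ with vertex set $\{x_1,\dots,x_n\}$, $R=K[x_1,\dots,x_n]$ for a field $K$, and the edge ideal is $I(G)=\langle x_ix_j \mid \{x_i,x_j\}\in E(G)\rangle$. We write $\operatorname{reg}(G)$ for the Castelnuovo–Mumford regularity $\operatorname{reg}(R/I(G))=\max\{j-i\mid \beta_{i,j}(R/I(G))\neq 0\}$. *)

(* Graded Betti numbers of R/I(G), R = K[x_0..x_(n-1)],
   computed as dim_K Tor_i^R(K, R/I(G))_j via the (multigraded) Koszul
   complex K(x_0..x_(n-1)) (x) R/I(G). *)
From mathcomp Require Import all_boot all_order all_algebra.
Set Implicit Arguments. Unset Strict Implicit. Unset Printing Implicit Defensive.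
Import GRing.Theory.
Local Open Scope ring_scope.

(* the monomial x^b lies in the edge ideal I(G) of the graph e on 'I_n *)
Definition in_edge_ideal (n : nat) (e : rel 'I_n) (b : 'I_n -> nat) : bool :=
  [exists u, exists v, [&& e u v, (0 < b u)%N & (0 < b v)%N]].

Definition shift_exp (n : nat) (a : 'I_n -> nat) (F : {set 'I_n}) : 'I_n -> nat :=
  fun k => (a k - (k \in F))%N.

(* e_F (x) x^(a - e_F) is a nonzero basis element of the multidegree-a part
   of the Koszul complex K(x) (x) R/I(G) *)
Definition kbasis (n : nat) (e : rel 'I_n) (a : 'I_n -> nat) (F : {set 'I_n}) : bool :=
  [forall k in F, (0 < a k)%N] && ~~ in_edge_ideal e (shift_exp a F).

Definition kbasis_deg (n : nat) (e : rel 'I_n) (a : 'I_n -> nat) (i : nat)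
  : {set {set 'I_n}} := [set F | kbasis e a F & #|F| == i].

(* Koszul sign of e_F -> e_(F minus k) *)
Definition ksign (K : fieldType) (n : nat) (F G : {set 'I_n}) : K :=
  if [pick k in F :\: G] is Some k
  then (-1) ^+ #|[set l in F | (val l < val k)%N]| else 0.

(* matrix (row-vector convention) of the Koszul differential from homological
   degree i to i-1, in multidegree a; rows/columns indexed by all subsets,
   zero outside the relevant bases *)
Definition kdiff (K : fieldType) (n : nat) (e : rel 'I_n) (a : 'I_n -> nat) (i : nat)
  : 'M[K]_(#|{set 'I_n}|) :=
  \matrix_(p, q)
    (let F := enum_val p in let G := enum_val q in
     if [&& F \in kbasis_deg e a i, kbasis e a G, G \subset F & #|F :\: G| == 1%N]
     then ksign K F G else 0).

(* multigraded Betti number beta_{i,a}(R/I(G)) = dim H_i of the complex *)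
Definition betti_mg (K : fieldType) (n : nat) (e : rel 'I_n) (a : 'I_n -> nat) (i : nat)
  : nat :=
  (#|kbasis_deg e a i| - \rank (kdiff K e a i) - \rank (kdiff K e a i.+1))%N.

Definition betti (K : fieldType) (n : nat) (e : rel 'I_n) (i j : nat) : nat :=
  (\sum_(a : {ffun 'I_n -> 'I_j.+1} | \sum_k val (a k) == j)
      betti_mg K e (fun k => val (a k)) i)%N.

From mathcomp Require Import all_boot all_order all_algebra.
From mathcomp Require Import zify.
Set Implicit Arguments. Unset Strict Implicit. Unset Printing Implicit Defensive.
Import GRing.Theory.
Local Open Scope ring_scope.

(* In multidegree [a] the Koszul complex K(x) (x) R/I(G) has a basis of the sets
   F with x^(a - e_F) outside I(G).  If some a_k >= 2 this family is a cone with
   apex k and its homology vanishes; if a = e_S it consists of the F inside S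
   with S \ F independent.  Sorting the cells by whether they contain a vertex v
   bounds the homology by that of two smaller complexes: v is forced into every
   cell, or v is deleted and its neighbours are forced in.  If v has no neighbour
   left the complex is a cone, so induction on the number of unforced vertices
   gives 2(|S| - i) <= |S|, i.e. 2(j - i) <= j <= n.  Equality is excluded since
   a connected graph on n >= 3 vertices has a vertex with two neighbours, and
   splitting there first gains one. *)

Lemma mxrank_mul_add_ker (K : fieldType) m1 m2 m3 n p
    (U : 'M[K]_(m1, n)) (V : 'M_(m2, n)) (M : 'M_(m3, n)) (B : 'M_(n, p)) :
  (U <= M)%MS -> (V <= M)%MS -> V *m B = 0 ->
  (\rank (U *m B) + \rank V <= \rank M)%N.
Proof.
move=> sUM sVM VB0.
have capUV : (\rank (U :&: V) <= \rank (U :&: kermx B))%N.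
  by apply: mxrankS; apply: capmxS => //; rewrite sub_kermx VB0.
have sumUV : (\rank (U + V) <= \rank M)%N.
  by apply: mxrankS; rewrite addsmx_sub sUM sVM.
have := mxrank_sum_cap U V; have := mxrank_mul_ker U B; lia.
Qed.

Lemma card_le_mxrank_diag (K : fieldType) m (A : {pred 'I_m}) :
  (#|A| <= \rank (diag_mx (\row_p (if p \in A then 1%R else 0%R : K) : 'rV[K]_m)))%N.
Proof.
set D := diag_mx _.
pose R : 'M[K]_(#|A|, m) := \matrix_(r, p) (if p == enum_val r then 1 else 0).
have RD : R *m D = R.
  apply/matrixP => r p; rewrite mul_mx_diag !mxE.
  by case: eqP => [->|]; rewrite ?enum_valP ?mulr1 ?mul0r.
have RRt : R *m R^T = 1%:M.
  apply/matrixP => r s; rewrite !mxE (bigD1 (enum_val r)) //= big1 => [|p /negbTE pr].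
    by rewrite !mxE eqxx mul1r addr0 (inj_eq enum_val_inj) eq_sym; case: eqP.
  by rewrite !mxE pr mul0r.
have := mxrankM_maxl R R^T; rewrite RRt mxrank1 -RD => /leq_trans; apply.
exact: mxrankM_maxr.
Qed.

Lemma card_setDU1 (T : finType) (A B : {set T}) x :
  x \in A :\: B -> #|A :\: B| = #|A :\: (x |: B)|.+1.
Proof.
move=> xAB; have -> : A :\: (x |: B) = (A :\: B) :\ x.
  by apply/setP => y; rewrite !inE negb_or andbA.
by rewrite (cardsD1 x (A :\: B)) xAB.
Qed.

Section KoszulSubcomplex.

Variables (K : fieldType) (n : nat).
Implicit Types (good : pred {set 'I_n}) (F G : {set 'I_n}) (i : nat).

Definition kcells good i : {set {set 'I_n}} := [set F | good F & #|F| == i].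

Definition kmx good i : 'M[K]_(#|{set 'I_n}|) :=
  \matrix_(p, q)
    (let F := enum_val p in let G := enum_val q in
     if [&& F \in kcells good i, good G, G \subset F & #|F :\: G| == 1%N]
     then ksign K F G else 0).

Definition khom good i : nat :=
  (#|kcells good i| - \rank (kmx good i) - \rank (kmx good i.+1))%N.

Lemma eq_khom good1 good2 i : good1 =1 good2 -> khom good1 i = khom good2 i.
Proof.
move=> eq_good.
have eq_cells k : kcells good1 k = kcells good2 k.
  by apply/setP => F; rewrite !inE eq_good.
have eq_mx k : kmx good1 k = kmx good2 k.
  by apply/matrixP => p q; rewrite !mxE /= eq_cells eq_good.
by rewrite /khom eq_cells !eq_mx.
Qed.

Lemma khom_neq0_cell good i : khom good i != 0%N -> exists2 F, good F & #|F| = i.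
Proof.
rewrite /khom; have [->|[F]] := set_0Vmem (kcells good i); first by rewrite cards0.
by rewrite inE => /andP[gF /eqP cF] _; exists F.
Qed.

Definition mem_proj v (b : bool) : 'M[K]_(#|{set 'I_n}|) :=
  diag_mx (\row_p (if (v \in (enum_val p : {set 'I_n})) == b then 1 else 0)).

Lemma kmx_mem good v i :
  mem_proj v true *m kmx good i *m mem_proj v true = kmx (fun F => good F && (v \in F)) i.
Proof.
apply/matrixP => p q; rewrite mul_mx_diag mul_diag_mx !mxE /kcells !inE /=.
by case: (v \in enum_val p); case: (v \in enum_val q);
  rewrite /= ?andbF ?andbT ?mul1r ?mulr1 ?mul0r ?mulr0.
Qed.

Lemma kmx_nmem good v i :
  mem_proj v false *m kmx good i = kmx (fun F => good F && (v \notin F)) i.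
Proof.
apply/matrixP => p q; rewrite mul_diag_mx !mxE /kcells !inE.
case vF: (v \in enum_val p); rewrite /= ?andbF ?mul0r ?mul1r ?andbT //=.
case sGF: (enum_val q \subset enum_val p); rewrite ?andbF //=.
by rewrite (contra (subsetP sGF v)) ?vF ?andbT.
Qed.

Lemma kmx_nmem_mem good v i : mem_proj v false *m kmx good i *m mem_proj v true = 0.
Proof.
apply/matrixP => p q; rewrite mul_mx_diag mul_diag_mx !mxE /kcells !inE.
case vF: (v \in enum_val p); case vG: (v \in enum_val q);
  rewrite /= ?mul0r ?mulr0 ?mul1r ?mulr1 //.
case sGF: (enum_val q \subset enum_val p); rewrite ?andbF //=.
by move: (subsetP sGF v vG); rewrite vF.
Qed.

Lemma khom_split good v i :
  (khom good i <= khom (fun F => good F && (v \in F)) i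
                  + khom (fun F => good F && (v \notin F)) i)%N.
Proof.
have rank_split k : (\rank (kmx (fun F => good F && (v \in F)) k)
    + \rank (kmx (fun F => good F && (v \notin F)) k) <= \rank (kmx good k))%N.
  rewrite -kmx_mem -kmx_nmem.
  by apply: mxrank_mul_add_ker; rewrite ?submxMl ?kmx_nmem_mem.
have card_split : #|kcells good i| = (#|kcells (fun F => good F && (v \in F)) i|
                  + #|kcells (fun F => good F && (v \notin F)) i|)%N.
  rewrite -(cardsID [set F : {set 'I_n} | v \in F] (kcells good i)); congr (_ + _)%N;
  by apply: eq_card => F; rewrite !inE; case: (v \in F); rewrite ?andbT ?andbF.
rewrite /khom card_split; have := rank_split i; have := rank_split i.+1; lia.
Qed.

Lemma ksign_sqr F G k : k \in F :\: G -> ksign K F G ^+ 2 = 1.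
Proof.
move=> kFG; rewrite /ksign; case: pickP => [l _|/(_ k)]; last by rewrite kFG.
by rewrite -exprM mulnC exprM sqrrN !expr1n.
Qed.

Section Cone.

Variables (good : pred {set 'I_n}) (k : 'I_n).
Hypothesis good_cone : forall F, k \notin F -> good (k |: F) = good F.

(* Right multiplication by [coneQ] sends the cell [F :\ k] to [F], so that it
   inverts [kmx good i] on the cells containing [k]. *)
Definition coneQ : 'M[K]_(#|{set 'I_n}|) :=
  \matrix_(q < #|{set 'I_n}|, p < #|{set 'I_n}|)
    (if (k \notin enum_val q) && (k |: enum_val q == enum_val p)
     then ksign K (enum_val p) (enum_val q) else 0).

Let apex_cells i := [set F in kcells good i | k \in F].
Let apex_idx i := [pred p : 'I_#|{set 'I_n}| | enum_val p \in apex_cells i].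
Let apex_diag i : 'M[K]_(#|{set 'I_n}|) :=
  diag_mx (\row_p (if p \in apex_idx i then 1 else 0)).

Lemma kmx_coneQ i : apex_diag i *m kmx good i *m coneQ = apex_diag i.
Proof.
apply/matrixP => p p'; rewrite -mulmxA mul_diag_mx !mxE inE.
have [|_] := boolP (enum_val p \in apex_cells i); last by rewrite !mul0r mul0rn.
rewrite mul1r !inE => /andP[/andP[gF cF] kF].
set F := enum_val p in gF cF kF *.
have gFk : good (F :\ k) by rewrite -good_cone ?setD1K ?setD11.
have FFk : F :\: (F :\ k) = [set k].
  by apply/setP => x; rewrite !inE; case: eqP => [->|] //=; case: (x \in F).
rewrite (bigD1 (enum_rank (F :\ k))) //= big1 ?addr0 => [|q q_ne].
  rewrite !mxE !enum_rankK /= -/F !inE gF cF gFk subD1set FFk cards1 !eqxx /=.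
  rewrite setD1K // (inj_eq enum_val_inj).
  case: eqP => [<-|_]; last by rewrite mulr0.
  by rewrite -expr2 (ksign_sqr (k := k)) ?FFk ?set11.
rewrite !mxE /=; case: ifP => [/and4P[_ _ sGF cFG]|]; last by rewrite mul0r.
case: ifP => [/andP[kG _]|]; last by rewrite mulr0.
case/eqP: q_ne; apply: enum_val_inj; rewrite enum_rankK.
apply/setP => x; rewrite !inE.
have [->|xk] /= := eqVneq x k; first by rewrite (negbTE kG).
apply/idP/idP => [/(subsetP sGF) //|xF]; apply/negPn/negP => xG.
have : [set k; x] \subset F :\: enum_val q.
  by apply/subsetP => y; rewrite !inE => /orP[]/eqP->; rewrite ?kG ?kF ?xG ?xF.
by move/subset_leq_card; rewrite cards2 (eqP cFG) eq_sym xk.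
Qed.

Lemma card_apex_le_rank i : (#|apex_cells i| <= \rank (kmx good i))%N.
Proof.
have card_idx : #|apex_idx i| = #|apex_cells i|.
  rewrite -(card_imset _ (@enum_val_inj _ _)); apply: eq_card => F.
  apply/imsetP/idP => [[p pA ->] //|FA].
  by exists (enum_rank F); rewrite ?enum_rankK // inE enum_rankK.
rewrite -card_idx; apply: (leq_trans (card_le_mxrank_diag K _)).
rewrite -/(apex_diag i) -{1}kmx_coneQ.
by apply: (leq_trans (mxrankM_maxl _ _)); apply: mxrankM_maxr.
Qed.

(* The cells of degree [i] avoiding [k] inject into those of degree [i+1]
   containing it, so both boundary ranks together exhaust the cells. *)
Lemma khom_cone i : khom good i = 0%N.
Proof.
have base_le : (#|[set F in kcells good i | k \notin F]| <= #|apex_cells i.+1|)%N.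
  rewrite -(@card_in_imset _ _ (fun F => k |: F)) => [|F1 F2]; last first.
    by rewrite !inE => /andP[_ k1] /andP[_ k2] E; rewrite -(setU1K k1) E setU1K.
  apply/subset_leq_card/subsetP => _ /imsetP[F + ->].
  rewrite !inE => /andP[/andP[gF cF] kF].
  by rewrite good_cone // gF cardsU1 kF (eqP cF) ?inE /= add1n !eqxx.
have card_cells : #|kcells good i| = (#|apex_cells i|
                    + #|[set F in kcells good i | k \notin F]|)%N.
  rewrite -(cardsID [set F : {set 'I_n} | k \in F] (kcells good i)); congr (_ + _)%N;
  by apply: eq_card => F; rewrite !inE // andbC.
have := card_apex_le_rank i; have := card_apex_le_rank i.+1.
rewrite /khom card_cells; lia.
Qed.

End Cone.

End KoszulSubcomplex.

Section IndependentCells.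

Variables (K : fieldType) (n : nat) (e : rel 'I_n).
Hypotheses (e_sym : symmetric e) (e_irr : irreflexive e).
Implicit Types (S T W F : {set 'I_n}) (v w : 'I_n).

Definition indep W : bool := ~~ [exists u, exists v, [&& e u v, u \in W & v \in W]].

Lemma indepS W1 W2 : W1 \subset W2 -> indep W2 -> indep W1.
Proof.
move=> sW12; apply: contra => /existsP[u /existsP[v /and3P[euv uW vW]]].
by apply/existsP; exists u; apply/existsP; exists v; rewrite euv !(subsetP sW12).
Qed.

Lemma indepU1 v W : indep (v |: W) = indep W && [forall w in W, ~~ e v w].
Proof.
apply/idP/andP => [indep_vW | [indepW /forall_inP vW]].
  split; first exact: indepS (subsetUr _ _) indep_vW.
  apply/forall_inP => w wW; apply: contra indep_vW => evw.
  by apply/existsP; exists v; apply/existsP; exists w; rewrite evw setU11 setU1r.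
apply/negP => /existsP[x /existsP[y /and3P[exy]]]; rewrite !inE.
case/orP => [/eqP xv|xW]; case/orP => [/eqP yv|yW].
- by rewrite xv yv e_irr in exy.
- by move: (vW _ yW); rewrite -xv exy.
- by move: (vW _ xW); rewrite e_sym -yv exy.
- move/negP: indepW; apply.
  by apply/existsP; exists x; apply/existsP; exists y; rewrite exy xW yW.
Qed.

Definition nbhd v : {set 'I_n} := [set w | e v w].

Lemma in_nbhd v w : (w \in nbhd v) = e v w.
Proof. by rewrite inE. Qed.

(* The basis of the multidegree-[S] part of the Koszul complex is
   [indep_cells S set0]; a nonempty [T] records vertices forced into every cell. *)
Definition indep_cells S T : pred {set 'I_n} :=
  fun F => [&& T \subset F, F \subset S & indep (S :\: F)].

Lemma khom_indep_cells_isolated S T v i :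
  v \in S :\: T -> {in S :\: T, forall w, ~~ e v w} ->
  khom K (indep_cells S T) i = 0%N.
Proof.
rewrite inE => /andP[vT vS] v_isolated; apply: (khom_cone K (k := v)) => F vF.
rewrite /indep_cells subUset sub1set vS /=.
have -> : (T \subset v |: F) = (T \subset F).
  apply/idP/idP => [sT|sTF]; last exact: subset_trans sTF (subsetUr _ _).
  apply/subsetP => x xT; move: (subsetP sT x xT); rewrite !inE.
  by case: eqP => [xv|] //=; rewrite -xv xT in vT.
have [sTF|] //= := boolP (T \subset F); have [sFS|] //= := boolP (F \subset S).
have -> : S :\: F = v |: (S :\: (v |: F)).
  by apply/setP => x; rewrite !inE; case: eqP => [->|_] /=; rewrite ?vF ?vS.
rewrite indepU1 -[LHS]andbT; congr (_ && _); symmetry; apply/forall_inP => w.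
rewrite !inE => /andP[/norP[wv wF] wS]; apply: v_isolated.
by rewrite !inE wS andbT; apply: contra wF; apply: (subsetP sTF).
Qed.

(* Cells containing [v] form the complex for [T] enlarged by [v]; in those
   avoiding [v], independence of [S :\: F] forces the neighbours of [v] into [F]. *)
Lemma khom_indep_cells_split S T v i : v \in S ->
  (khom K (indep_cells S T) i <= khom K (indep_cells S (v |: T)) i
     + khom K (indep_cells (S :\ v) (T :|: S :&: nbhd v)) i)%N.
Proof.
move=> vS.
have cells_mem : (fun F => indep_cells S T F && (v \in F)) =1 indep_cells S (v |: T).
  move=> F; rewrite /indep_cells subUset sub1set.
  by case: (v \in F); case: (T \subset F); rewrite /= ?andbT ?andbF.
have cells_nmem : (fun F => indep_cells S T F && (v \notin F)) =1
                  indep_cells (S :\ v) (T :|: S :&: nbhd v).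
  move=> F; rewrite /indep_cells subUset subsetD1.
  case vF: (v \in F); rewrite /= ?andbF ?andbT //.
  have -> : S :\: F = v |: ((S :\ v) :\: F).
    by apply/setP => x; rewrite !inE; case: eqP => [->|_] /=; rewrite ?vF ?vS.
  rewrite indepU1.
  have -> : [forall w in (S :\ v) :\: F, ~~ e v w] = (S :&: nbhd v \subset F).
    apply/forall_inP/subsetP => [nbF x|nbF w].
      rewrite !inE => /andP[xS evx]; apply/negPn/negP => xF.
      have xv : x != v by apply: contraTneq evx => ->; rewrite e_irr.
      by move: (nbF x); rewrite !inE xF xv xS evx => /(_ isT).
    rewrite !inE => /and3P[wF wv wS]; apply/negP => evw.
    by move: (nbF w); rewrite !inE wS evw (negbTE wF) => /(_ isT).
  by case: (T \subset F); case: (F \subset S); case: (indep _); case: (_ \subset F).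
have := khom_split K (indep_cells S T) v i.
by rewrite (eq_khom K i cells_mem) (eq_khom K i cells_nmem).
Qed.

Lemma khom_indep_cells_branch S T v i : v \in S -> khom K (indep_cells S T) i != 0%N ->
  khom K (indep_cells S (v |: T)) i != 0%N \/
  khom K (indep_cells (S :\ v) (T :|: S :&: nbhd v)) i != 0%N.
Proof.
move=> vS nz; have split_le := khom_indep_cells_split T i vS.
have [z1|] := eqVneq (khom K (indep_cells S (v |: T)) i) 0%N; last by left.
by right; apply: contra nz => /eqP z2; move: split_le; rewrite z1 z2 addn0 leqn0.
Qed.

Lemma card_indep_branch S T v : v \in S :\: T ->
  (#|(S :\ v) :\: (T :|: S :&: nbhd v)|
     + #|(S :\: T) :&: nbhd v|).+1 = #|S :\: T|.
Proof.
move=> vST; set N := nbhd v.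
have -> : (S :\ v) :\: (T :|: S :&: N) = ((S :\: T) :\: N) :\ v.
  apply/setP => x; rewrite !inE.
  by case: (x \in S); case: (x \in T); rewrite ?andbF ?andbT //= andbC.
have vSTN : v \in (S :\: T) :\: N by rewrite inE vST inE e_irr.
by rewrite -(cardsID N (S :\: T)) (cardsD1 v ((S :\: T) :\: N)) vSTN addnC addnS.
Qed.

Lemma khom_indep_cells_subset S T i :
  S \subset T -> khom K (indep_cells S T) i != 0%N -> (#|S| <= i)%N.
Proof.
move=> sST /khom_neq0_cell[F /and3P[sTF sFS _] <-].
by rewrite subset_leq_card // (subset_trans sST sTF).
Qed.

Lemma khom_indep_cells_bound_step S T v i : v \in S :\: T ->
  (forall S' T', (#|S' :\: T'| < #|S :\: T|)%N -> khom K (indep_cells S' T') i != 0%N ->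
     (2 * (#|S'| - i) <= #|S' :\: T'|)%N) ->
  khom K (indep_cells S T) i != 0%N -> (2 * (#|S| - i) <= #|S :\: T|)%N.
Proof.
move=> vST IH nz.
have [/forall_inP v_isolated|] := boolP [forall w in S :\: T, ~~ e v w].
  by rewrite (khom_indep_cells_isolated i vST v_isolated) in nz.
rewrite negb_forall_in => /exists_inP[w wST /negPn evw].
have vS : v \in S by case/setDP: vST.
have card_nbhd : (0 < #|(S :\: T) :&: nbhd v|)%N.
  by apply/card_gt0P; exists w; rewrite inE wST in_nbhd.
have card_S : #|S| = #|S :\ v|.+1 by rewrite (cardsD1 v S) vS.
have card_vT : #|S :\: T| = #|S :\: (v |: T)|.+1 := card_setDU1 vST.
have card_branch := card_indep_branch vST.
have lt_vT : (#|S :\: (v |: T)| < #|S :\: T|)%N by lia.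
have lt_Sv : (#|(S :\ v) :\: (T :|: S :&: nbhd v)| < #|S :\: T|)%N by lia.
by case: (khom_indep_cells_branch vS nz) => [/(IH _ _ lt_vT)|/(IH _ _ lt_Sv)]; lia.
Qed.

Lemma khom_indep_cells_bound S T i : khom K (indep_cells S T) i != 0%N ->
  (2 * (#|S| - i) <= #|S :\: T|)%N.
Proof.
have [m] := ubnP #|S :\: T|; elim: m S T => // m IH S T lt_m nz.
have [ST0|[v vST]] := set_0Vmem (S :\: T).
  have sST : S \subset T by rewrite -setD_eq0 ST0.
  by have := khom_indep_cells_subset sST nz; lia.
apply: (khom_indep_cells_bound_step vST) nz => S' T' lt_ST'; apply: IH.
exact: leq_trans lt_ST' lt_m.
Qed.

Lemma khom_indep_cells_bound_lt S T v w1 w2 i :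
  v \in S :\: T -> w1 \in S :\: T -> w2 \in S :\: T -> w1 != w2 -> e v w1 -> e v w2 ->
  khom K (indep_cells S T) i != 0%N -> (2 * (#|S| - i) < #|S :\: T|)%N.
Proof.
move=> vST w1ST w2ST w12 evw1 evw2 nz.
have vS : v \in S by case/setDP: vST.
have card_nbhd : (1 < #|(S :\: T) :&: nbhd v|)%N.
  have : [set w1; w2] \subset (S :\: T) :&: nbhd v.
    by apply/subsetP => x /set2P[]->; rewrite in_setI in_nbhd ?w1ST ?w2ST.
  by move/subset_leq_card; rewrite cards2 w12.
have card_S : #|S| = #|S :\ v|.+1 by rewrite (cardsD1 v S) vS.
have card_vT : #|S :\: T| = #|S :\: (v |: T)|.+1 := card_setDU1 vST.
have card_branch := card_indep_branch vST.
by case: (khom_indep_cells_branch vS nz) => /khom_indep_cells_bound; lia.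
Qed.

Hypothesis e_connected : forall u v, connect e u v.

Lemma exists_two_neighbours :
  (3 <= n)%N -> exists v w1 w2, [/\ w1 != w2, e v w1 & e v w2].
Proof.
move=> n_ge3.
have [/existsP[v /existsP[w1 /existsP[w2 /and3P[]]]]|no_cherry] :=
  boolP [exists v, exists w1, exists w2, [&& w1 != w2, e v w1 & e v w2]].
  by exists v, w1, w2.
have nbhd_uniq v w1 w2 : e v w1 -> e v w2 -> w1 = w2.
  move=> evw1 evw2; apply/eqP; apply: contraNT no_cherry => w12.
  apply/existsP; exists v; apply/existsP; exists w1; apply/existsP; exists w2.
  by rewrite w12 evw1 evw2.
have reach x y : connect e x y -> (y == x) || e x y.
  case/connectP => p + ->; elim/last_ind: p => [|p z IHp] /=; first by rewrite eqxx.
  rewrite rcons_path last_rcons => /andP[/IHp + ez].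
  case/orP => [/eqP <-|exy]; first by rewrite ez orbT.
  by rewrite (nbhd_uniq _ z x ez) ?eqxx // e_sym.
have [lt0n lt1n lt2n] : [/\ 0 < n, 1 < n & 2 < n]%N by split; lia.
case/orP: (reach _ _ (e_connected (Ordinal lt0n) (Ordinal lt1n))) => // e01.
case/orP: (reach _ _ (e_connected (Ordinal lt0n) (Ordinal lt2n))) => // e02.
by have /(congr1 val) := nbhd_uniq _ _ _ e01 e02.
Qed.

(* Strictness comes from a vertex with two neighbours, needed only when [S] is
   the whole vertex set. *)
Lemma khom_indep_cells_connected S i : (3 <= n)%N ->
  khom K (indep_cells S set0) i != 0%N -> (2 * (#|S| - i) < n)%N.
Proof.
move=> n_ge3 nz; have card_T : #|[set: 'I_n]| = n by rewrite cardsT card_ord.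
have [ST|] := eqVneq S setT.
  have [v [w1 [w2 [w12 evw1 evw2]]]] := exists_two_neighbours n_ge3.
  have inT x : x \in [set: 'I_n] :\: set0 by rewrite setD0 inE.
  rewrite ST in nz *.
  have := khom_indep_cells_bound_lt (inT v) (inT w1) (inT w2) w12 evw1 evw2 nz.
  by rewrite setD0 card_T.
rewrite -properT => /proper_card; rewrite card_T.
by have := khom_indep_cells_bound nz; rewrite setD0; lia.
Qed.

Lemma in_edge_idealE b : in_edge_ideal e b = ~~ indep [set k | 0 < b k]%N.
Proof. by rewrite negbK; apply: eq_existsb => u; apply: eq_existsb => v; rewrite !inE. Qed.

Lemma betti_mg_cone a i k : (1 < a k)%N -> betti_mg K e a i = 0%N.
Proof.
move=> a_k; apply: (khom_cone K (k := k)) => F kF.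
rewrite /kbasis !in_edge_idealE; congr (_ && ~~ ~~ indep _).
  apply/forall_inP/forall_inP => a_pos x xF; first by apply: a_pos; rewrite inE xF orbT.
  by move: xF; rewrite !inE => /orP[/eqP ->|/a_pos]; first lia.
apply/setP => x; rewrite !inE /shift_exp !inE.
by case: eqP => [->|//]; rewrite (negbTE kF) /= subn0 subn_gt0 a_k (ltnW a_k).
Qed.

Lemma betti_mg_squarefree a i : (forall k, a k <= 1)%N ->
  betti_mg K e a i = khom K (indep_cells [set k | 0 < a k]%N set0) i.
Proof.
move=> a_le1; apply: eq_khom => F.
rewrite /kbasis /indep_cells sub0set in_edge_idealE negbK /=.
congr andb.
  by apply/forall_inP/subsetP => a_pos x /a_pos; rewrite inE.
congr indep; apply/setP => x; rewrite !inE /shift_exp.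
by have := a_le1 x; case: (x \in F) => /=; [rewrite subn_gt0 ltnNge => -> | rewrite subn0].
Qed.

Lemma betti_mg_lt a i : (3 <= n)%N ->
  betti_mg K e a i != 0%N -> (2 * (\sum_k a k - i) < n)%N.
Proof.
move=> n_ge3 nz.
have [/existsP[k a_k]|] := boolP [exists k, 1 < a k]%N.
  by rewrite (betti_mg_cone i a_k) in nz.
rewrite negb_exists => /forallP a_le1.
have sum_a : \sum_k a k = #|[set k | 0 < a k]%N|.
  rewrite -sum1_card [RHS]big_mkcond; apply: eq_bigr => k _; rewrite inE.
  by move: (a_le1 k); case: (a k) => [|[]].
rewrite sum_a; apply: khom_indep_cells_connected n_ge3 _.
by rewrite -betti_mg_squarefree // => k; rewrite leqNgt.
Qed.

End IndependentCells.

Theorem proposition2p9 (K : fieldType) (n : nat) (e : rel 'I_n) :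
  (3 <= n)%N -> symmetric e -> irreflexive e ->
  (forall u v : 'I_n, connect e u v) ->
  forall i j : nat, betti K e i j != 0%N -> (2 * j < n + 2 * i)%N.
Proof.
move=> n_ge3 e_sym e_irr e_connected i j.
rewrite /betti sum_nat_eq0 negb_forall => /existsP[a].
rewrite negb_imply => /andP[/eqP sum_a nz].
by have := betti_mg_lt e_sym e_irr e_connected n_ge3 nz; rewrite sum_a; lia.
Qed.
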